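(* Let $\mathbf{m}$ be diagonal with strictly positive diagonal, fix a realization of $\mathbf{R}$, and let $\hat b=(\mathbf{x}'\mathbf{m}\mathbf{R}\mathbf{x})^{+}\mathbf{x}'\mathbf{m}\mathbf{R}y$. Define the missing imputed estimator $\hat\mu^{MI}=\frac1n\mathbf{1}'\big(I_{kn}-(\mathbf{R}-I_{kn})\mathbf{x}(\mathbf{x}'\mathbf{m}\mathbf{R}\mathbf{x})^{+}\mathbf{x}'\mathbf{m}\big)\mathbf{R}y$ and the generalized regression estimator $\hat\mu^{GR}=\frac1n\mathbf{1}'\pi^{-1}\mathbf{R}y-\big(\frac1n\mathbf{1}'\pi^{-1}\mathbf{R}-\frac1n\mathbf{1}'\big)\mathbf{x}\hat b$. If there exists $\mathbf{t}\in\mathbb{R}^{(k+p)\times k}$ with $\mathbf{R}\mathbf{m}\mathbf{x}\mathbf{t}=\mathbf{R}(I_{kn}-\pi^{-1})\mathbf{1}$, then $\hat\mu^{MI}=\hat\mu^{GR}$.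
   Context: $k$ arms, $n$ units, $p$ covariates. $y\in\mathbb{R}^{kn}$ stacks potential outcomes of the $k$ arms. $\mathbf{R}$ is the $kn\times kn$ diagonal matrix of assignment indicators (ordered arm by arm), $\pi=\mathrm{E}[\mathbf{R}]$ with entries in $(0,1)$. $\mathbf{1}=I_k\otimes1_n$; $\mathbf{x}=[\mathbf{1}\mid1_k\otimes X]$ for a covariate matrix $X\in\mathbb{R}^{n\times p}$; $A^+$ is the Moore–Penrose inverse. *)

From HB Require Import structures.
From mathcomp Require Import all_boot all_order all_algebra.
Set Implicit Arguments. Unset Strict Implicit. Unset Printing Implicit Defensive.
Import Order.TTheory GRing.Theory Num.Theory.
Local Open Scope ring_scope.

(* Indices of R^{kn}: index (a, u) (arm a, unit u) is mxvec_index a u = a*n + u,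
   i.e. ordered arm by arm. *)

(* Moore--Penrose inverse (over a real field the adjoint is the transpose):
   B is the Moore--Penrose inverse of A iff the four Penrose equations hold. *)
Definition is_MP_inverse (F : realFieldType) (r c : nat)
  (A : 'M[F]_(r, c)) (B : 'M[F]_(c, r)) : Prop :=
  [/\ A *m B *m A = A, B *m A *m B = B,
      (A *m B)^T = A *m B & (B *m A)^T = B *m A].

(* bold 1 = I_k (x) 1_n : a (k n) x k matrix *)
Definition bone (F : ringType) (k n : nat) : 'M[F]_(k * n, k) :=
  \matrix_(i, c) (mxvec (\matrix_(a < k, u < n) ((a == c)%:R : F))) 0 i.

(* 1_k (x) X : a (k n) x p matrix *)
Definition kronX (F : ringType) (k n p : nat) (X : 'M[F]_(n, p)) : 'M[F]_(k * n, p) :=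
  \matrix_(i, j) (mxvec (\matrix_(a < k, u < n) X u j)) 0 i.

Definition bigx (F : ringType) (k n p : nat) (X : 'M[F]_(n, p)) : 'M[F]_(k * n, k + p) :=
  row_mx (bone F k n) (kronX k X).

From HB Require Import structures.
From mathcomp Require Import all_boot all_order all_algebra.
Import Order.TTheory GRing.Theory Num.Theory.
Set Implicit Arguments.
Unset Strict Implicit.
Unset Printing Implicit Defensive.

Local Open Scope ring_scope.

(* Write W := m R, a nonnegative diagonal weight, and D := 1'(I - pi^-1) R.
   Both estimators differ from each other by n^-1 (D y - D x b), and the
   hypothesis on t says D = t' x' W.  For a generalized inverse P of the
   weighted Gram matrix x' W x one has x' W x P x' W = x' W (the rows of
   x' W - x' W x P x' W lie in the kernel of the semidefinite form W), so
   D x b = t' x' W x P x' W y = t' x' W y = D y. *)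

Lemma mx_diag_gram_eq0 (F : realFieldType) (m r : nat)
    (G : 'M[F]_(m, r)) (w : 'rV[F]_r) :
  (forall i, 0 <= w 0 i) -> G *m diag_mx w *m G^T = 0 -> G *m diag_mx w = 0.
Proof.
move=> w_ge0 gram0; apply/matrixP => j i; rewrite mul_mx_diag !mxE.
have term_ge0 l : true -> 0 <= (G *m diag_mx w) j l * G^T l j.
  by move=> _; rewrite mul_mx_diag !mxE mulrAC -expr2 mulr_ge0 ?sqr_ge0.
have diag0 := congr1 (fun N : 'M[F]_m => N j j) gram0; rewrite !mxE in diag0.
have := psumr_eq0P term_ge0 diag0 (i := i) isT.
rewrite mul_mx_diag !mxE => term0.
have : (G j i * w 0 i) * (G j i * w 0 i) == 0 by rewrite mulrA term0 mul0r.
by rewrite mulf_eq0 orbb => /eqP.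
Qed.

Lemma mulmx_wgram_ginv (F : realFieldType) (r c : nat)
    (A : 'M[F]_(r, c)) (w : 'rV[F]_r) (P : 'M[F]_c) :
  (forall i, 0 <= w 0 i) ->
  let M := A^T *m diag_mx w *m A in
  M *m P *m M = M -> M *m P *m (A^T *m diag_mx w) = A^T *m diag_mx w.
Proof.
move=> w_ge0 M MPM; set G := A^T - M *m P *m A^T.
have GWA0 : G *m diag_mx w *m A = 0.
  rewrite /G !mulmxBl.
  have -> : M *m P *m A^T *m diag_mx w *m A = M *m P *m M by rewrite /M !mulmxA.
  by rewrite MPM subrr.
have GWG0 : G *m diag_mx w *m G^T = 0.
  rewrite {2}/G linearB /= trmx_mul trmxK mulmxBr !mulmxA.
  by rewrite GWA0 !mul0mx subrr.
apply/eqP; rewrite eq_sym -subr_eq0 mulmxA -mulmxBl.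
by rewrite (mx_diag_gram_eq0 w_ge0 GWG0).
Qed.

Lemma subrBB_eq (V : zmodType) (a b c d e : V) :
  a - d = b - e -> a - (b - c) = d - (e - c).
Proof.
by move=> h; rewrite !opprB addrCA -[a - b](subrKA d) h (addrC (b - e)) subrKA addrCA.
Qed.

Lemma imputed_eq_regression (R : pzRingType) (q r m s : nat) (c : R)
    (o : 'M[R]_(q, r)) (Pi W : 'M[R]_r) (x : 'M[R]_(r, m)) (B : 'M[R]_(m, r))
    (y : 'M[R]_(r, s)) :
  o *m (1%:M - Pi) *m W *m y = o *m (1%:M - Pi) *m W *m x *m (B *m W *m y) ->
  c *: (o *m (1%:M - (W - 1%:M) *m x *m B) *m W *m y)
  = c *: (o *m Pi *m W *m y) - (c *: (o *m Pi *m W) - c *: o) *m x *m (B *m W *m y).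
Proof.
rewrite -scalerBr -!scalemxAl -scalerBr => Dy; congr (_ *: _).
move: Dy; rewrite !(mulmxBr, mulmxBl, mulmx1, mul1mx, mulmxA).
exact: subrBB_eq.
Qed.

Theorem mainTheorem9 (F : realFieldType) (k n p : nat)
  (X : 'M[F]_(n, p)) (y : 'cV[F]_(k * n))
  (Rv piv mv : 'rV[F]_(k * n))
  (HR01 : forall i, Rv 0 i = 0 \/ Rv 0 i = 1)
  (HRone : forall u : 'I_n, \sum_(a < k) Rv 0 (mxvec_index a u) = 1)
  (Hpi : forall i, 0 < piv 0 i < 1)
  (Hm : forall i, 0 < mv 0 i)
  (Pinv : 'M[F]_(k + p, k + p))
  (HPinv : is_MP_inverse
             ((bigx k X)^T *m diag_mx mv *m diag_mx Rv *m bigx k X) Pinv)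
  (t : 'M[F]_(k + p, k))
  (Ht : diag_mx Rv *m diag_mx mv *m bigx k X *m t
        = diag_mx Rv *m (1%:M - invmx (diag_mx piv)) *m bone F k n) :
  let Rm := diag_mx Rv in
  let mm := diag_mx mv in
  let pim1 := invmx (diag_mx piv) in
  let x := bigx k X in
  let one := bone F k n in
  let bhat := Pinv *m x^T *m mm *m Rm *m y in
  let muMI := n%:R^-1 *: (one^T *m (1%:M - (Rm - 1%:M) *m x *m Pinv *m x^T *m mm)
                               *m Rm *m y) in
  let muGR := n%:R^-1 *: (one^T *m pim1 *m Rm *m y)
              - (n%:R^-1 *: (one^T *m pim1 *m Rm) - n%:R^-1 *: one^T) *m x *m bhat in
  muMI = muGR.
Proof.
move=> Rm mm pim1 x one bhat muMI muGR.
set w := \row_i (mv 0 i * Rv 0 i).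
have w_ge0 i : 0 <= w 0 i.
  by rewrite mxE; case: (HR01 i) => ->; rewrite ?mulr0 ?mulr1 // ltW.
have eW : x^T *m mm *m Rm = x^T *m diag_mx w by rewrite -mulmxA mulmx_diag.
have [MPM _ _ _] := HPinv; rewrite -/x -/mm -/Rm eW in MPM.
have absorb : x^T *m mm *m Rm *m x *m Pinv *m (x^T *m mm *m Rm) = x^T *m mm *m Rm.
  by rewrite eW; apply: mulmx_wgram_ginv.
have D_tr : one^T *m (1%:M - pim1) *m Rm = t^T *m (x^T *m mm *m Rm).
  have := congr1 trmx Ht; rewrite !trmx_mul !tr_diag_mx linearB /= trmx_inv.
  by rewrite tr_diag_mx !trmx1 !mulmxA => ->.
rewrite /muMI /muGR /bhat -(mulmxA _ Pinv) -(mulmxA _ (Pinv *m x^T)).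
apply: imputed_eq_regression.
by rewrite D_tr -{1}absorb !mulmxA.
Qed.
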